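(* Let $\alpha,\beta,\gamma\in\mathbb{R}$, and let $G_3$ be the connected, simply connected Lie group whose Lie algebra $\mathfrak{g}_3$ has a basis $\{e_1,e_2,e_3\}$ with $[e_1,e_2]=-\gamma e_3$, $[e_1,e_3]=-\beta e_2$, $[e_2,e_3]=\alpha e_1$, equipped with the left-invariant Lorentzian metric $g$ for which $\{e_1,e_2,e_3\}$ is pseudo-orthonormal with $e_3$ timelike, and with the product structure $J$. Let $\lambda_0,c\in\mathbb{R}$. Then there exists a derivation $D$ of $\mathfrak{g}_3$ with $\widetilde{\mathrm{Ric}}^1=(s^1\lambda_0+c)\mathrm{Id}+D$ (i.e. $(G_3,g,J)$ is an algebraic Schouten soliton associated to the Kobayashi–Nomizu connection $\nabla^1$) if and only if one of the following holds: (i) $\alpha=\beta=\gamma=0$ and $c\neq0$; (ii) $\alpha=0$ and $c=-\beta\gamma+\beta\gamma\lambda_0$; (iii) $\beta=0$ and $c=-\alpha\gamma+\alpha\gamma\lambda_0$; (iv) $\alpha\beta\neq0$, $\gamma=0$ and $c=0$.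
   Context: Pseudo-orthonormal means $g(e_1,e_1)=g(e_2,e_2)=1$, $g(e_3,e_3)=-1$, $g(e_i,e_j)=0$ for $i\neq j$; left-invariant tensors are identified with their values on $\mathfrak{g}$. $\nabla$ is the Levi-Civita connection of $g$. The product structure $J$ is the left-invariant endomorphism with $Je_1=e_1$, $Je_2=e_2$, $Je_3=-e_3$. The canonical connection is $\nabla^0_XY=\nabla_XY-\frac12(\nabla_XJ)JY$, and the Kobayashi–Nomizu connection is $\nabla^1_XY=\nabla^0_XY-\frac14[(\nabla_YJ)JX-(\nabla_{JY}J)X]$. For $k=0,1$: $R^k(X,Y)Z=\nabla^k_X\nabla^k_YZ-\nabla^k_Y\nabla^k_XZ-\nabla^k_{[X,Y]}Z$; $\rho^k(X,Y)=-g(R^k(X,e_1)Y,e_1)-g(R^k(X,e_2)Y,e_2)+g(R^k(X,e_3)Y,e_3)$; $\widetilde\rho^k(X,Y)=\frac12(\rho^k(X,Y)+\rho^k(Y,X))$; $\widetilde{\mathrm{Ric}}^k$ is defined by $\widetilde\rho^k(X,Y)=g(\widetilde{\mathrm{Ric}}^k(X),Y)$; and $s^k=\widetilde\rho^k(e_1,e_1)+\widetilde\rho^k(e_2,e_2)-\widetilde\rho^k(e_3,e_3)$. A derivation of $\mathfrak{g}$ is a linear map $D$ with $D[X,Y]=[DX,Y]+[X,DY]$. $(G,g,J)$ is an algebraic Schouten soliton associated to $\nabla^k$ (with real constants $\lambda_0,c$) if $\widetilde{\mathrm{Ric}}^k=(s^k\lambda_0+c)\mathrm{Id}+D$ for some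 derivation $D$. *)

(* The Lie algebra g_3 is identified with R^3 = 'rV[R]_3 via
   the basis e_1, e_2, e_3 (= delta rows at indices 0, 1, 2). All left-invariant
   tensors are identified with their values on g_3. *)
From HB Require Import structures.
From mathcomp Require Import all_boot all_order all_algebra.
Set Implicit Arguments. Unset Strict Implicit. Unset Printing Implicit Defensive.
Import Order.TTheory GRing.Theory Num.Theory.
Local Open Scope ring_scope.

Section G3.
Variable R : realFieldType.
Variables alpha beta gamma : R.

Local Notation V := 'rV[R]_3.

Definition i1 : 'I_3 := @Ordinal 3 0 isT.
Definition i2 : 'I_3 := @Ordinal 3 1 isT.
Definition i3 : 'I_3 := @Ordinal 3 2 isT.

Definition ev (i : 'I_3) : V := delta_mx 0 i.
Definition e1 : V := ev i1.
Definition e2 : V := ev i2.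
Definition e3 : V := ev i3.

Definition brb (i j : 'I_3) : V :=
  match nat_of_ord i, nat_of_ord j with
  | 0, 1 => - gamma *: e3
  | 1, 0 => gamma *: e3
  | 0, 2 => - beta *: e2
  | 2, 0 => beta *: e2
  | 1, 2 => alpha *: e1
  | 2, 1 => - alpha *: e1
  | _, _ => 0
  end.

Definition br (X Y : V) : V := \sum_(i < 3) \sum_(j < 3) (X 0 i * Y 0 j) *: brb i j.

Definition eps (i : 'I_3) : R := if i == i3 then -1 else 1.

Definition g (X Y : V) : R := \sum_(i < 3) eps i * X 0 i * Y 0 i.

(* Levi-Civita connection on left-invariant fields, via the Koszul formula
   2 g(nabla_X Y, Z) = g([X,Y],Z) - g([Y,Z],X) + g([Z,X],Y),
   and nabla_X Y = sum_k eps_k g(nabla_X Y, e_k) e_k *)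
Definition koszul (X Y Z : V) : R := (g (br X Y) Z - g (br Y Z) X + g (br Z X) Y) / 2.
Definition nabla (X Y : V) : V := \sum_(k < 3) (eps k * koszul X Y (ev k)) *: ev k.

Definition J (X : V) : V := \row_(i < 3) (if i == i3 then - X 0 i else X 0 i).

Definition nablaJ (X Y : V) : V := nabla X (J Y) - J (nabla X Y).

Definition nabla0 (X Y : V) : V := nabla X Y - 2^-1 *: nablaJ X (J Y).

Definition nabla1 (X Y : V) : V :=
  nabla0 X Y - 4^-1 *: (nablaJ Y (J X) - nablaJ (J Y) X).

Definition curv (nab : V -> V -> V) (X Y Z : V) : V :=
  nab X (nab Y Z) - nab Y (nab X Z) - nab (br X Y) Z.

Definition ricci (nab : V -> V -> V) (X Y : V) : R :=
  - g (curv nab X e1 Y) e1 - g (curv nab X e2 Y) e2 + g (curv nab X e3 Y) e3.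

Definition sricci (nab : V -> V -> V) (X Y : V) : R :=
  2^-1 * (ricci nab X Y + ricci nab Y X).

(* Ricci operator: g(Ric X, Y) = sricci X Y *)
Definition Ric_op (nab : V -> V -> V) (X : V) : V :=
  \sum_(k < 3) (eps k * sricci nab X (ev k)) *: ev k.

Definition scal (nab : V -> V -> V) : R :=
  sricci nab e1 e1 + sricci nab e2 e2 - sricci nab e3 e3.

Definition is_derivation (D : 'M[R]_3) : Prop :=
  forall X Y : V, br X Y *m D = br (X *m D) Y + br X (Y *m D).

Definition alg_schouten_soliton (nab : V -> V -> V) (lambda0 c : R) : Prop :=
  exists D : 'M[R]_3, is_derivation D /\
    forall X : V, Ric_op nab X = (scal nab * lambda0 + c) *: X + X *m D.

End G3.

(** The Kobayashi–Nomizu connection of this structure is very degenerate: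
    [nabla1_X Y = (-alpha X3 Y2, beta X3 Y1, 0)].  Its curvature only sees
    the [e3]-component of the bracket, and the symmetrised Ricci operator is
    the diagonal matrix [diag(-beta gamma, -alpha gamma, 0)], with scalar
    curvature [-gamma (alpha + beta)].  Hence the soliton equation forces
    [D = Ric - kappa Id] with [kappa = s lambda0 + c], and the question is
    when this diagonal matrix is a derivation.  A diagonal
    [diag(d1, d2, d3)] is a derivation iff [alpha (d1 - d2 - d3)],
    [beta (d1 + d3 - d2)] and [gamma (d1 + d2 - d3)] all vanish, and solving
    these three polynomial equations gives the four cases. *)
From HB Require Import structures.
From mathcomp Require Import all_boot all_order all_algebra.
From mathcomp Require Import ring.
Set Implicit Arguments. Unset Strict Implicit. Unset Printing Implicit Defensive.
Import Order.TTheory GRing.Theory Num.Theory.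
Local Open Scope ring_scope.

Lemma big_ord3 (T : nmodType) (F : 'I_3 -> T) :
  \sum_(i < 3) F i = F i1 + F i2 + F i3.
Proof.
rewrite !big_ord_recr big_ord0 /= add0r.
by congr (F _ + F _ + F _); apply/val_inj.
Qed.

Lemma row3P (T : Type) (u v : 'rV[T]_3) :
  u 0 i1 = v 0 i1 -> u 0 i2 = v 0 i2 -> u 0 i3 = v 0 i3 -> u = v.
Proof.
move=> h1 h2 h3; apply/rowP => -[[|[|[|?]]] ?] //.
- by rewrite (_ : Ordinal _ = i1) //; apply/val_inj.
- by rewrite (_ : Ordinal _ = i2) //; apply/val_inj.
- by rewrite (_ : Ordinal _ = i3) //; apply/val_inj.
Qed.

Definition row3 {R : Type} (a b c : R) : 'rV[R]_3 :=
  \row_(j < 3) nth a [:: a; b; c] j.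

Lemma mulmx_eq_scale_addP (R : comNzRingType) n (A D : 'M[R]_n) (k : R) :
  (forall X : 'rV_n, X *m A = k *: X + X *m D) <-> D = A - k%:M.
Proof.
split=> [hAD | ->] => [|X]; last by rewrite mulmxBr mul_mx_scalar addrC subrK.
apply/row_matrixP => i; rewrite !rowE mulmxBr mul_mx_scalar hAD.
by rewrite addrAC subrr add0r.
Qed.

Section KobayashiNomizu.
Variable R : realFieldType.
Variables al be ga : R.
Local Notation V := 'rV[R]_3.
Local Notation br := (br al be ga).
Local Notation nabla1 := (nabla1 al be ga).

Lemma brE (X Y : V) : br X Y =
  row3 (al * (X 0 i2 * Y 0 i3 - X 0 i3 * Y 0 i2))
       (- be * (X 0 i1 * Y 0 i3 - X 0 i3 * Y 0 i1))
       (- ga * (X 0 i1 * Y 0 i2 - X 0 i2 * Y 0 i1)).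
Proof. by apply: row3P; rewrite /br !big_ord3 /= !mxE /=; ring. Qed.

Lemma gE (X Y : V) :
  g X Y = X 0 i1 * Y 0 i1 + X 0 i2 * Y 0 i2 - X 0 i3 * Y 0 i3.
Proof. by rewrite /g big_ord3 /eps /=; ring. Qed.

Lemma JE (X : V) : J X = row3 (X 0 i1) (X 0 i2) (- X 0 i3).
Proof. by apply: row3P; rewrite !mxE. Qed.

Lemma nablaE (X Y : V) : nabla al be ga X Y =
  row3 ((al - be + ga) / 2 * X 0 i2 * Y 0 i3 - (al + be - ga) / 2 * X 0 i3 * Y 0 i2)
       ((al - be - ga) / 2 * X 0 i1 * Y 0 i3 + (al + be - ga) / 2 * X 0 i3 * Y 0 i1)
       ((al - be - ga) / 2 * X 0 i1 * Y 0 i2 + (al - be + ga) / 2 * X 0 i2 * Y 0 i1).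
Proof.
rewrite /nabla /koszul big_ord3 !brE !gE.
by apply: row3P; rewrite !mxE /= /eps /=; ring.
Qed.

Lemma nabla1E (X Y : V) :
  nabla1 X Y = row3 (- al * X 0 i3 * Y 0 i2) (be * X 0 i3 * Y 0 i1) 0.
Proof.
rewrite /nabla1 /nabla0 /nablaJ !JE !nablaE ?JE.
by apply: row3P; rewrite !mxE /=; field; rewrite ?pnatr_eq0.
Qed.

(* [nabla1_X (nabla1_Y Z) = - al be X3 Y3 (Z1, Z2, 0)] is symmetric in [X] and
   [Y], so only the bracket term survives. *)
Lemma curv_nabla1E (X Y Z : V) :
  curv al be ga nabla1 X Y Z =
  (ga * (X 0 i1 * Y 0 i2 - X 0 i2 * Y 0 i1)) *: row3 (- al * Z 0 i2) (be * Z 0 i1) 0.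
Proof. by rewrite /curv !nabla1E brE; apply: row3P; rewrite !mxE /=; ring. Qed.

Definition ricci_diag : V := row3 (- (be * ga)) (- (al * ga)) 0.

Lemma Ric_nabla1E (X : V) :
  Ric_op al be ga nabla1 X = X *m diag_mx ricci_diag.
Proof.
rewrite /Ric_op big_ord3 /sricci /ricci !curv_nabla1E /e1 /e2 /e3 mul_mx_diag !gE.
by apply: row3P; rewrite !mxE /= /eps /=; field; rewrite ?pnatr_eq0.
Qed.

Lemma scal_nabla1E : scal al be ga nabla1 = - ga * (al + be).
Proof.
rewrite /scal /sricci /ricci !curv_nabla1E /e1 /e2 /e3 !gE !mxE /=.
by field; rewrite ?pnatr_eq0.
Qed.

Lemma diag_derivationP (d : V) :
  is_derivation al be ga (diag_mx d) <->
  [/\ al * (d 0 i1 - d 0 i2 - d 0 i3) = 0,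
      be * (d 0 i1 + d 0 i3 - d 0 i2) = 0
    & ga * (d 0 i1 + d 0 i2 - d 0 i3) = 0].
Proof.
split=> [hD | [da db dg] X Y].
  have := hD (e2 R) (e3 R); have := hD (e1 R) (e3 R); have := hD (e1 R) (e2 R).
  rewrite /e1 /e2 /e3 !brE !mul_mx_diag.
  move=> /(congr1 (fun v : V => v 0 i3)) + /(congr1 (fun v : V => v 0 i2)) +
         /(congr1 (fun v : V => v 0 i1)).
  rewrite !mxE /= => dg db da.
  by split; [move: da | move: db | move: dg]; move=> /eqP;
    rewrite -subr_eq0 => /eqP <-; ring.
rewrite !brE !mul_mx_diag; apply: row3P; rewrite !mxE /=;
  apply/eqP; rewrite -subr_eq0; apply/eqP.
- transitivity ((X 0 i2 * Y 0 i3 - X 0 i3 * Y 0 i2) *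
    (al * (d 0 i1 - d 0 i2 - d 0 i3))); first by ring.
  by rewrite da mulr0.
- transitivity ((X 0 i1 * Y 0 i3 - X 0 i3 * Y 0 i1) *
    (be * (d 0 i1 + d 0 i3 - d 0 i2))); first by ring.
  by rewrite db mulr0.
- transitivity ((X 0 i1 * Y 0 i2 - X 0 i2 * Y 0 i1) *
    (ga * (d 0 i1 + d 0 i2 - d 0 i3))); first by ring.
  by rewrite dg mulr0.
Qed.

Lemma nabla1_schouten_solitonP (lambda0 c : R) :
  alg_schouten_soliton al be ga nabla1 lambda0 c <->
  is_derivation al be ga
    (diag_mx (ricci_diag - const_mx (- ga * (al + be) * lambda0 + c))).
Proof.
rewrite /alg_schouten_soliton scal_nabla1E raddfB /= diag_const_mx.
set kappa := _ + c; split=> [[D [hD hRic]] | hD].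
  suff <- : D = diag_mx ricci_diag - kappa%:M by [].
  by apply/mulmx_eq_scale_addP => X; rewrite -Ric_nabla1E.
exists (diag_mx ricci_diag - kappa%:M); split => // X.
by rewrite Ric_nabla1E; move: X; apply/mulmx_eq_scale_addP.
Qed.

End KobayashiNomizu.

Lemma soliton_casesP (R : numDomainType) (a b g l c : R)
    (k := - g * (a + b) * l + c)
    (d1 := - (b * g) - k) (d2 := - (a * g) - k) (d3 := - k) :
  [/\ a * (d1 - d2 - d3) = 0, b * (d1 + d3 - d2) = 0 & g * (d1 + d2 - d3) = 0]
  <->
  [\/ (a = 0 /\ b = 0 /\ g = 0 /\ c != 0),
      (a = 0 /\ c = - (b * g) + b * g * l),
      (b = 0 /\ c = - (a * g) + a * g * l)
    | (a * b != 0 /\ g = 0 /\ c = 0)].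
Proof.
have -> : d1 - d2 - d3 = k + (a - b) * g by rewrite /d1 /d2 /d3; ring.
have -> : d1 + d3 - d2 = (a - b) * g - k by rewrite /d1 /d2 /d3; ring.
have -> : d1 + d2 - d3 = - ((a + b) * g) - k by rewrite /d1 /d2 /d3; ring.
have hc : c = k + g * (a + b) * l by rewrite /k; ring.
split; last first.
  by rewrite /k; case=> [[-> [-> [-> _]]] | [-> ->] | [-> ->] | [_ [-> ->]]];
    split; ring.
rewrite hc => -[/eqP + /eqP + /eqP]; rewrite !mulf_eq0.
have [-> _ hb hg | a0 /= ka] := eqVneq a 0.
  have [kb | kb] := eqVneq (k + b * g) 0.
    apply: Or42; split => //.
    by move/eqP: kb; rewrite addr_eq0 => /eqP ->; ring.
  move: hb hg; have -> : (0 - b) * g - k = - (k + b * g) by ring.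
  have -> : - ((0 + b) * g) - k = - (k + b * g) by ring.
  rewrite oppr_eq0 (negPf kb) !orbF => /eqP b0 /eqP g0.
  apply: Or41; do 3!split => //.
  by move: kb; rewrite b0 g0 !(mul0r, mulr0, addr0).
move: ka; have [-> ka _ _ | b0 ka /= kb hg] := eqVneq b 0.
  apply: Or43; split => //.
  by move: ka; rewrite subr0 addr_eq0 => /eqP ->; ring.
move: kb ka; rewrite subr_eq0 => /eqP kb.
rewrite kb -mulr2n mulrn_eq0 /= => /eqP k0.
have [g0 | g0] := eqVneq g 0.
  by apply: Or44; rewrite g0 k0; split => //; split => //; ring.
move: hg kb; rewrite k0 subr0 oppr_eq0 !mulf_eq0 (negPf g0) !orbF.
move=> /= /eqP /addr0_eq ab /eqP; rewrite mulf_eq0 (negPf g0) orbF subr_eq0.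
by move: a0; rewrite -eqNr ab eq_sym => /negPf ->.
Qed.

Theorem theorem4p7 (R : realFieldType) (alpha beta gamma lambda0 c : R) :
  alg_schouten_soliton alpha beta gamma
    (nabla1 alpha beta gamma) lambda0 c
  <->
  [\/ (alpha = 0 /\ beta = 0 /\ gamma = 0 /\ c != 0),
      (alpha = 0 /\ c = - (beta * gamma) + beta * gamma * lambda0),
      (beta = 0 /\ c = - (alpha * gamma) + alpha * gamma * lambda0)
    | (alpha * beta != 0 /\ gamma = 0 /\ c = 0)].
Proof.
apply: iff_trans (nabla1_schouten_solitonP _ _ _ _ _) _.
apply: iff_trans (diag_derivationP _ _ _ _) _.
rewrite !mxE /= sub0r.
exact: (soliton_casesP alpha beta gamma lambda0 c).
Qed.
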